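(* Let $q\geq2$ and $0<\alpha<(q-1)/q$. A randomized $q$-SGKH algorithm which on every input of length $n$ has expected cost at most $\alpha n$ must read at least $$b\geq K_{1/q}(1-\alpha)\,n=(1-h_q(\alpha))\,n\log_2 q$$ bits of advice.
   Context: $q$-SGKH (string guessing with known history) is the repeated matrix game with the $q\times q$ cost matrix with $0$ on the diagonal and $1$ elsewhere: inputs $(n,x_1,\dots,x_n)$ with $x_i\in[q]$; in round $i$ the algorithm knows $n,x_1,\dots,x_{i-1}$ and guesses $y_i\in[q]$, paying $1$ if $y_i\neq x_i$ and $0$ otherwise; $n$ is the length. Advice is read from an infinite tape prepared by an oracle knowing the input; a randomized algorithm with advice is a probability distribution over deterministic algorithms with advice. $K_y(x)=x\log_2(x/y)+(1-x)\log_2((1-x)/(1-y))$, and $h_q(x)=x\log_q(q-1)-x\log_qx-(1-x)\log_q(1-x)$. *)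

From mathcomp Require Import all_boot all_order all_algebra.
From mathcomp Require Import all_classical all_reals all_analysis.
Set Implicit Arguments. Unset Strict Implicit. Unset Printing Implicit Defensive.
Import Order.TTheory GRing.Theory Num.Theory.
Local Open Scope ring_scope.

Definition advice := nat -> bool.

(* A deterministic q-SGKH algorithm with advice: given the length n, the
   advice tape, and the history x_1..x_{i-1}, it outputs the guess y_i. *)
Definition det_alg (q : nat) := nat -> advice -> seq 'I_q -> 'I_q.

Definition cost (q n : nat) (A : det_alg q) (x : n.-tuple 'I_q) (phi : advice)
  : nat :=
  \sum_(i < n) (A n phi (take i x) != tnth x i : nat).

Definition reads_at_most (q : nat) (b n : nat) (A : det_alg q) : Prop :=
  forall phi phi' : advice, (forall k, (k < b)%N -> phi k = phi' k) ->
  forall h : seq 'I_q, (size h < n)%N -> A n phi h = A n phi' h.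

Definition log2 {R : realType} (x : R) : R := ln x / ln 2.

Definition KL {R : realType} (y x : R) : R :=
  x * log2 (x / y) + (1 - x) * log2 ((1 - x) / (1 - y)).

Definition logb {R : realType} (b x : R) : R := ln x / ln b.

Definition hq {R : realType} (q : nat) (x : R) : R :=
  x * logb q%:R (q%:R - 1) - x * logb q%:R x - (1 - x) * logb q%:R (1 - x).

From mathcomp Require Import all_boot all_order all_algebra.
From mathcomp Require Import all_classical all_reals all_analysis.
From mathcomp Require Import ring lra.

Set Implicit Arguments.
Unset Strict Implicit.
Unset Printing Implicit Defensive.
Import Order.TTheory GRing.Theory Num.Theory.
Local Open Scope ring_scope.

(* Exponential moment argument.  Fix a deterministic algorithm and an advice
   string w of length b.  Weighting each input x by u^(number of mistakes)
   and summing over x round by round, every round contributes the factor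
   1 + (q - 1) u whatever the guess, so the total is (1 + (q - 1) u)^n.
   Summing over the 2^b advice strings bounds the weight of the inputs paired
   with their oracle advice by 2^b (1 + (q - 1) u)^n; by Jensen the randomized
   algorithm, of expected cost at most alpha n, gives each input weight at
   least u^(alpha n).  Hence q^n u^(alpha n) <= 2^b (1 + (q - 1) u)^n, and
   the choice u = alpha / ((q - 1)(1 - alpha)) turns the logarithm of this
   into K_{1/q}(1 - alpha) n <= b. *)

Lemma big_tuple_cons (R : Type) (idx : R) (op : Monoid.com_law idx)
    (T : finType) n (F : n.+1.-tuple T -> R) :
  \big[op/idx]_t F t =
  \big[op/idx]_z \big[op/idx]_(t : n.-tuple T) F [tuple of z :: t].
Proof.
rewrite pair_big (reindex (fun p : T * n.-tuple T => [tuple of p.1 :: p.2])) //=.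
exists (fun t : n.+1.-tuple T => (thead t, [tuple of behead t])).
  by move=> [z t] _; congr pair; apply: val_inj.
by move=> t _; rewrite [RHS]tuple_eta.
Qed.

Lemma sum_tuple_adaptive_prod (R : pzSemiRingType) (T : finType) (K : R)
    (f : T -> T -> R) :
  (forall y, \sum_z f y z = K) ->
  forall n (g : seq T -> T),
  \sum_(x : n.-tuple T) \prod_(i < n) f (g (take i x)) (tnth x i) = K ^+ n.
Proof.
move=> row_sum; elim=> [|n IHn] g.
  under eq_bigr do rewrite big_ord0.
  by rewrite sumr_const card_tuple expn0.
rewrite big_tuple_cons exprS -{1}(row_sum (g [::])) mulr_suml.
apply: eq_bigr => z _; rewrite -(IHn (fun h => g (z :: h))) mulr_sumr.
apply: eq_bigr => x _; rewrite big_ord_recl; congr (_ * _).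
by apply: eq_bigr => i _; rewrite !(tnth_nth z).
Qed.

Lemma sum_expR_neq (R : realType) (T : finType) (y : T) (c : R) :
  \sum_z expR (c * (y != z)%:R) = 1 + (#|T|%:R - 1) * expR c.
Proof.
rewrite (bigD1 y) //= eqxx mulr0 expR0; congr (_ + _).
under eq_bigr => z z_neq_y do rewrite eq_sym z_neq_y mulr1.
rewrite sumr_const cardC1 -[LHS]mulr_natr mulrC -subn1 natrB //.
by apply/card_gt0P; exists y.
Qed.

Lemma sum_expR_cost (R : realType) q n (A : det_alg q) (phi : advice) (c : R) :
  \sum_(x : n.-tuple 'I_q) expR (c * (cost A x phi)%:R)
    = (1 + (q%:R - 1) * expR c) ^+ n.
Proof.
have row_sum y : \sum_z expR (c * (y != z :> 'I_q)%:R) = 1 + (q%:R - 1) * expR c.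
  by rewrite sum_expR_neq card_ord.
rewrite -(sum_tuple_adaptive_prod row_sum n (A n phi)).
by apply: eq_bigr => x _; rewrite natr_sum mulr_sumr expR_sum.
Qed.

Definition advice_prefix b (phi : advice) : {ffun 'I_b -> bool} :=
  [ffun i : 'I_b => phi i].

Definition pad_advice b (w : {ffun 'I_b -> bool}) : advice :=
  fun k => if insub k is Some i then w i else false.

Lemma cost_advice_prefix q b n (A : det_alg q) (x : n.-tuple 'I_q) phi :
  reads_at_most b n A -> cost A x phi = cost A x (pad_advice (advice_prefix b phi)).
Proof.
move=> readsA; apply: eq_bigr => i _; congr (nat_of_bool (_ != _)).
apply: readsA; last by rewrite size_take size_tuple ltn_ord.
by move=> k kb; rewrite /pad_advice insubT ffunE.
Qed.

Lemma ler_sum_choice (R : numDomainType) (I W : finType) (F : I -> W -> R)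
    (s : I -> W) :
  (forall i w, 0 <= F i w) -> \sum_i F i (s i) <= \sum_w \sum_i F i w.
Proof.
move=> F_ge0; rewrite exchange_big; apply: ler_sum => i _.
by rewrite (bigD1 (s i)) //= lerDl sumr_ge0.
Qed.

Lemma sum_expR_cost_oracle (R : realType) q b n (A : det_alg q)
    (oracle : n.-tuple 'I_q -> advice) (c : R) :
  reads_at_most b n A ->
  \sum_x expR (c * (cost A x (oracle x))%:R)
    <= 2 ^+ b * (1 + (q%:R - 1) * expR c) ^+ n.
Proof.
move=> readsA.
under eq_bigr => x _ do rewrite (cost_advice_prefix x (oracle x) readsA).
pose F (x : n.-tuple 'I_q) w := expR (c * (cost A x (@pad_advice b w))%:R).
apply: le_trans (ler_sum_choice (F := F) (advice_prefix b \o oracle) _) _.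
  by move=> x w; apply/ltW/expR_gt0.
under eq_bigr do rewrite sum_expR_cost.
by rewrite sumr_const card_ffun card_bool card_ord -natrX mulr_natl.
Qed.

Lemma expR_jensen (R : realType) (J : finType) (p y : J -> R) :
  (forall j, 0 <= p j) -> \sum_j p j = 1 ->
  expR (\sum_j p j * y j) <= \sum_j p j * expR (y j).
Proof.
move=> p_ge0 p_sum1; set m := \sum_j p j * y j.
have tangent j : expR m * (1 + (y j - m)) <= expR (y j).
  rewrite -[X in _ <= expR X](subrK m) expRD mulrC.
  by rewrite ler_wpM2r ?expR_ge1Dx // ltW ?expR_gt0.
apply: le_trans (ler_sum _ (fun j _ => ler_wpM2l (p_ge0 j) (tangent j))).
have -> : \sum_j p j * (expR m * (1 + (y j - m))) =
   \sum_j (expR m * p j + expR m * (p j * y j) - expR m * m * p j).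
  by apply: eq_bigr => j _; ring.
by rewrite sumrB big_split /= -!mulr_sumr p_sum1 !mulr1 -/m addrK.
Qed.

Lemma randomized_advice_bound (R : realType) q n b (J : finType) (p : J -> R)
    (A : J -> det_alg q) (oracle : n.-tuple 'I_q -> advice) (C c : R) :
  (forall j, 0 <= p j) -> \sum_j p j = 1 ->
  (forall j, 0 < p j -> reads_at_most b n (A j)) ->
  (forall x, \sum_j p j * (cost (A j) x (oracle x))%:R <= C) -> c <= 0 ->
  (q ^ n)%:R * expR (c * C) <= 2 ^+ b * (1 + (q%:R - 1) * expR c) ^+ n.
Proof.
move=> p_ge0 p_sum1 readsA costA c_le0.
have weight_ge x :
    expR (c * C) <= \sum_j p j * expR (c * (cost (A j) x (oracle x))%:R).
  apply: le_trans (expR_jensen _ p_ge0 p_sum1); rewrite ler_expR.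
  under eq_bigr do rewrite mulrCA.
  by rewrite -mulr_sumr ler_wnM2l.
have -> : (q ^ n)%:R * expR (c * C) = \sum_(x : n.-tuple 'I_q) expR (c * C).
  by rewrite sumr_const card_tuple card_ord mulr_natl.
apply: le_trans (ler_sum _ (fun x _ => weight_ge x)) _.
rewrite exchange_big /=.
apply: le_trans (_ : _ <= \sum_j p j * (2 ^+ b * (1 + (q%:R - 1) * expR c) ^+ n)) _.
  apply: ler_sum => j _; rewrite -mulr_sumr.
  have [->|pj_neq0] := eqVneq (p j) 0; first by rewrite !mul0r.
  have pj_gt0 : 0 < p j by rewrite lt0r pj_neq0 p_ge0.
  exact/ler_wpM2l/sum_expR_cost_oracle/readsA.
by rewrite -mulr_suml p_sum1 mul1r.
Qed.

Lemma KL_uniform (R : realType) (Q alpha : R) :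
  1 < Q -> 0 < alpha -> alpha < 1 ->
  KL Q^-1 (1 - alpha) * ln 2 =
  ln Q + alpha * ln alpha - alpha * ln (Q - 1) + (1 - alpha) * ln (1 - alpha).
Proof.
move=> Q_gt1 a_gt0 a_lt1.
have ln2_gt0 : 0 < ln (2 : R) by rewrite ln_gt0 //; lra.
rewrite /KL /log2 invrK.
have -> : (1 - (1 - alpha)) / (1 - Q^-1) = alpha / ((Q - 1) / Q).
  by congr (_ / _); [lra | field; lra].
rewrite lnM ?ln_div ?posrE ?divr_gt0 //; try lra.
by field; lra.
Qed.

Lemma KL_hq (R : realType) q (alpha : R) :
  (1 < q)%N -> 0 < alpha -> alpha < 1 ->
  KL q%:R^-1 (1 - alpha) = (1 - hq q alpha) * log2 (q%:R : R).
Proof.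
move=> q_gt1 a_gt0 a_lt1; have Q_gt1 : (1 : R) < q%:R by rewrite ltr1n.
have ln2_gt0 : 0 < ln (2 : R) by rewrite ln_gt0 //; lra.
have lnQ_gt0 : 0 < ln (q%:R : R) by rewrite ln_gt0.
apply: (mulIf (lt0r_neq0 ln2_gt0)); rewrite KL_uniform //.
by rewrite /hq /logb /log2; field; lra.
Qed.

Definition optimal_tilt (R : realType) (q : nat) (alpha : R) : R :=
  alpha / ((q%:R - 1) * (1 - alpha)).

Section OptimalTilt.
Variables (R : realType) (q : nat) (alpha : R).
Hypotheses (Q_gt1 : (1 : R) < q%:R) (alpha_gt0 : 0 < alpha) (alpha_lt1 : alpha < 1).

Let u := optimal_tilt q alpha.

Lemma optimal_tilt_gt0 : 0 < u.
Proof. by rewrite divr_gt0 // mulr_gt0 // subr_gt0. Qed.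

Lemma optimal_tilt_le1 : alpha < (q%:R - 1) / q%:R -> u <= 1.
Proof.
rewrite ltr_pdivlMr ?(lt_trans ltr01 Q_gt1) // => alphaQ_lt.
by rewrite ler_pdivrMr ?mulr_gt0 ?subr_gt0 //; lra.
Qed.

Lemma ln_optimal_tilt : ln u = ln alpha - ln (q%:R - 1) - ln (1 - alpha).
Proof.
by rewrite /u /optimal_tilt ln_div ?lnM ?posrE ?mulr_gt0 ?subr_gt0 //; ring.
Qed.

Lemma optimal_tilt_factor : 1 + (q%:R - 1) * u = (1 - alpha)^-1.
Proof. by rewrite /u /optimal_tilt; field; rewrite !subr_eq0 !gt_eqF. Qed.

Lemma KL_le_of_tilted_bound n b :
  (q ^ n)%:R * expR (ln u * (alpha * n%:R)) <= 2 ^+ b * (1 + (q%:R - 1) * u) ^+ n ->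
  KL q%:R^-1 (1 - alpha) * n%:R <= b%:R.
Proof.
have ln2_gt0 : 0 < ln (2 : R) by rewrite ln_gt0 //; lra.
have Q_gt0 : (0 : R) < q%:R := lt_trans ltr01 Q_gt1.
have qn_gt0 : (0 : R) < (q ^ n)%:R by rewrite natrX exprn_gt0.
rewrite ln_optimal_tilt optimal_tilt_factor.
rewrite -ler_ln ?posrE ?mulr_gt0 ?exprn_gt0 ?expR_gt0 ?invr_gt0 ?subr_gt0 //.
rewrite !lnM ?posrE ?exprn_gt0 ?expR_gt0 ?invr_gt0 ?subr_gt0 // expRK natrX.
have two_gt0 : (0 : R) < 2 by [].
have K_gt0 : 0 < (1 - alpha)^-1 by rewrite invr_gt0 subr_gt0.
rewrite (lnXn _ Q_gt0) (lnXn _ two_gt0) (lnXn _ K_gt0) lnV ?posrE ?subr_gt0 // => ln_bound.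
by rewrite -(ler_pM2r ln2_gt0) mulrAC KL_uniform //; lra.
Qed.

End OptimalTilt.

Theorem theorem9 (R : realType) (q : nat) (alpha : R) (n b : nat)
    (J : finType) (p : J -> R) (A : J -> det_alg q)
    (oracle : n.-tuple 'I_q -> advice) :
  (2 <= q)%N -> 0 < alpha -> alpha < (q%:R - 1) / q%:R ->
  (forall j, 0 <= p j) -> \sum_j p j = 1 ->
  (forall j, 0 < p j -> reads_at_most b n (A j)) ->
  (forall x : n.-tuple 'I_q,
      \sum_j p j * (cost (A j) x (oracle x))%:R <= alpha * n%:R) ->
  KL (q%:R^-1) (1 - alpha) * n%:R <= b%:R /\
  KL (q%:R^-1) (1 - alpha) = (1 - hq q alpha) * log2 (q%:R : R).
Proof.
move=> q_gt1 a_gt0 a_lt p_ge0 p_sum1 readsA costA.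
have a_lt1 : alpha < 1.
  by apply: lt_le_trans a_lt _; rewrite ler_pdivrMr ?ltr0n ?(ltnW q_gt1) // mul1r gerBl.
split; last exact: KL_hq.
have Q_gt1 : (1 : R) < q%:R by rewrite ltr1n.
have u_le1 : optimal_tilt q alpha <= 1 by apply: optimal_tilt_le1.
have := randomized_advice_bound p_ge0 p_sum1 readsA costA (ln_le0 u_le1).
by rewrite lnK ?posrE ?optimal_tilt_gt0 //; exact: KL_le_of_tilted_bound.
Qed.
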